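(* Let $w_1,\dots,w_k\in\mathbb{R}^n$ be unit vectors, $f(x)=\bigwedge_{i=1}^k\mathrm{sign}(w_i\cdot x)$, and $\rho>0$. Let $\mathbf{P},\mathbf{N}$ be finite subsets of the unit sphere $\mathbb{S}^{n-1}$ with $f(x)=1$ for all $x\in\mathbf{P}$, and let \[\mathcal{H}=\{w\in\mathbb{R}^{n+1}:\|w\|_2\le1,\ w\cdot(x,1)\ge0\ \forall x\in\mathbf{P},\ w\cdot(x,1)\le0\ \forall x\in\mathbf{N}\}.\] If $w_1\cdot x<-\rho$ for all $x\in\mathbf{N}$, then \[|\mathcal{H}|\ge\left(\frac{\rho}{3(1+\rho)}\right)^{n+1}|B_2^n|,\] where $|\cdot|$ denotes Lebesgue volume (in the respective dimension) and $B_2^n=\{w\in\mathbb{R}^n:\|w\|_2\le1\}$. Moreover, $\mathcal{H}$ contains a ball of radius $\frac{\rho}{6(1+\rho)}$.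
   Context: $f(x)=1$ iff $w_i\cdot x>0$ for all $i\in[k]$, and $f(x)=-1$ otherwise. *)

From HB Require Import structures.
From mathcomp Require Import all_boot all_order all_algebra.
From mathcomp Require Import all_classical all_reals.
From mathcomp Require Import ereal sequences esum.
Set Implicit Arguments. Unset Strict Implicit. Unset Printing Implicit Defensive.
Import Order.TTheory GRing.Theory Num.Theory.
Local Open Scope classical_set_scope.
Local Open Scope ring_scope.

Section Defs.
Variable R : realType.

Definition dotv (n : nat) (x y : 'I_n -> R) : R := \sum_(i < n) x i * y i.
Definition norm2 (n : nat) (x : 'I_n -> R) : R := Num.sqrt (dotv x x).

Definition sphere (n : nat) : set ('I_n -> R) := [set x | norm2 x = 1].
Definition unit_ball (n : nat) : set ('I_n -> R) := [set x | norm2 x <= 1].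

(* the vector (x,1) in R^{n+1} *)
Definition ext1 (n : nat) (x : 'I_n -> R) : 'I_n.+1 -> R :=
  fun i => if (insub (val i) : option 'I_n) is Some j then x j else 1.

Definition box (n : nat) (a b : 'I_n -> R) : set ('I_n -> R) :=
  [set x | forall i, a i <= x i <= b i].
Definition box_vol (n : nat) (a b : 'I_n -> R) : R := \prod_(i < n) (b i - a i).

Definition lebesgue_vol (n : nat) (A : set ('I_n -> R)) : \bar R :=
  ereal_inf [set s : \bar R | exists (a b : nat -> 'I_n -> R),
    [/\ (forall k i, a k i <= b k i),
        A `<=` \bigcup_k box (a k) (b k) &
        s = (\sum_(0 <= k <oo) (box_vol (a k) (b k))%:E)%E]].

Definition Hspace (n : nat) (P N : seq ('I_n -> R)) : set ('I_n.+1 -> R) :=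
  [set w | norm2 w <= 1 /\
           (forall x, x \in P -> 0 <= dotv w (ext1 x)) /\
           (forall x, x \in N -> dotv w (ext1 x) <= 0)].

End Defs.

(* Let p = 1/(1+rho), q = rho/(3(1+rho)) and w = w_1.  The cylinder
   C = {(u, h) : |u - p w| <= q, q <= h <= 2q} lies in H: for x in P the
   inner product (u, h).(x, 1) is at least p (w.x) - q + q >= 0, for x in N it
   is at most -p rho + q + 2q = 0, and (p + q)^2 + (2q)^2 <= 1.  A cover of C
   by boxes restricts at every height h in [q, 2q] to a cover of a ball of
   radius q; integrating over h gives |C| >= q * q^n |B_2^n|.  Being of radius
   q and height q, C also contains a ball of radius q/2. *)

From HB Require Import structures.
From mathcomp Require Import all_boot all_order all_algebra.
From mathcomp Require Import all_classical all_reals.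
From mathcomp Require Import ereal sequences esum.
From mathcomp Require Import numfun measure measurable_realfun lebesgue_measure.
From mathcomp Require Import lebesgue_integral.
From mathcomp Require Import ring lra.
Import Order.TTheory GRing.Theory Num.Theory.
Local Open Scope classical_set_scope.
Local Open Scope ring_scope.
Set Implicit Arguments.
Unset Strict Implicit.
Unset Printing Implicit Defensive.

Section InnerProduct.
Variables (R : realType) (n : nat).
Implicit Types (x y z : 'I_n -> R).

Lemma dotvC x y : dotv x y = dotv y x.
Proof. by apply: eq_bigr => i _; rewrite mulrC. Qed.

Lemma dotvDl x y z : dotv (fun i => x i + y i) z = dotv x z + dotv y z.
Proof. by rewrite /dotv -big_split; apply: eq_bigr => i _; rewrite mulrDl. Qed.

Lemma dotvBl x y z : dotv (fun i => x i - y i) z = dotv x z - dotv y z.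
Proof. by rewrite /dotv -sumrB; apply: eq_bigr => i _; rewrite mulrBl. Qed.

Lemma dotvZl (c : R) x z : dotv (fun i => c * x i) z = c * dotv x z.
Proof. by rewrite /dotv mulr_sumr; apply: eq_bigr => i _; rewrite mulrA. Qed.

Lemma dotvDr x y z : dotv z (fun i => x i + y i) = dotv z x + dotv z y.
Proof. by rewrite dotvC dotvDl !(dotvC z). Qed.

Lemma dotvBr x y z : dotv z (fun i => x i - y i) = dotv z x - dotv z y.
Proof. by rewrite dotvC dotvBl !(dotvC z). Qed.

Lemma dotvZr (c : R) x z : dotv z (fun i => c * x i) = c * dotv z x.
Proof. by rewrite dotvC dotvZl dotvC. Qed.

Lemma dotvv_ge0 x : 0 <= dotv x x.
Proof. by apply: sumr_ge0 => i _; rewrite -expr2 sqr_ge0. Qed.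

Lemma dotvv_eq0 x : dotv x x = 0 -> forall i, x i = 0.
Proof.
move=> /eqP; rewrite psumr_eq0; last by move=> i _; rewrite -expr2 sqr_ge0.
by move=> /allP x0 i; have /implyP/(_ isT) := x0 i (mem_index_enum i);
  rewrite mulf_eq0 orbb => /eqP.
Qed.

Lemma norm2_ge0 x : 0 <= norm2 x.
Proof. exact: sqrtr_ge0. Qed.

Lemma sqr_norm2 x : norm2 x ^+ 2 = dotv x x.
Proof. by rewrite sqr_sqrtr // dotvv_ge0. Qed.

Lemma norm2Z (c : R) x : norm2 (fun i => c * x i) = `|c| * norm2 x.
Proof.
by rewrite /norm2 dotvZl dotvZr mulrA -expr2 sqrtrM ?sqr_ge0 // sqrtr_sqr.
Qed.

Lemma cauchy_schwarz_sqr x y : dotv x y ^+ 2 <= dotv x x * dotv y y.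
Proof.
set A := dotv x x; set B := dotv y y; set C := dotv x y.
have [B0|BnZ] := eqVneq B 0.
  have y0 := dotvv_eq0 B0.
  have -> : C = 0 by rewrite /C /dotv big1 // => i _; rewrite y0 mulr0.
  by rewrite expr0n mulr_ge0 ?dotvv_ge0.
have B_gt0 : 0 < B by rewrite lt_def BnZ dotvv_ge0.
(* the squared norm of B x - C y is B (A B - C^2) *)
have := dotvv_ge0 (fun i => B * x i - C * y i).
rewrite dotvBl !dotvBr !dotvZl !dotvZr -/A -/B -/C (dotvC y x) -/C.
have -> : B * (B * A) - B * (C * C) - (C * (B * C) - C * (C * B))
    = B * (A * B - C ^+ 2) by ring.
by rewrite pmulr_rge0 // subr_ge0.
Qed.

Lemma cauchy_schwarz x y : `|dotv x y| <= norm2 x * norm2 y.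
Proof.
rewrite /norm2 -sqrtrM ?dotvv_ge0 // -sqrtr_sqr.
exact/ler_wsqrtr/cauchy_schwarz_sqr.
Qed.

Lemma unit_vector_dim_gt0 x : norm2 x = 1 -> (0 < n)%N.
Proof.
by case: n x => // x; rewrite /norm2 /dotv big_ord0 sqrtr0 => /esym/eqP;
  rewrite oner_eq0.
Qed.

End InnerProduct.

Section Coordinates.
Variables (R : realType) (n : nat).

Definition vinit (v : 'I_n.+1 -> R) : 'I_n -> R :=
  fun i => v (widen_ord (leqnSn n) i).

Definition vrcons (u : 'I_n -> R) (h : R) : 'I_n.+1 -> R :=
  fun i => if (insub (val i) : option 'I_n) is Some j then u j else h.

Lemma ext1E (x : 'I_n -> R) : ext1 x = vrcons x 1.
Proof. by []. Qed.

Lemma vrcons_widen (u : 'I_n -> R) h i :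
  vrcons u h (widen_ord (leqnSn n) i) = u i.
Proof.
rewrite /vrcons; case: insubP => [j _ ij|]; last by rewrite /= ltn_ord.
by congr u; apply: val_inj.
Qed.

Lemma vinit_rcons (u : 'I_n -> R) h : vinit (vrcons u h) = u.
Proof. by apply: funext => i; rewrite /vinit vrcons_widen. Qed.

Lemma vrcons_max (u : 'I_n -> R) h : vrcons u h ord_max = h.
Proof. by rewrite /vrcons; case: insubP => [j|]; rewrite //= ltnn. Qed.

Lemma dotv_rsplit (v y : 'I_n.+1 -> R) :
  dotv v y = dotv (vinit v) (vinit y) + v ord_max * y ord_max.
Proof. by rewrite /dotv big_ord_recr. Qed.

Lemma box_vol_rsplit (a b : 'I_n.+1 -> R) :
  box_vol a b = box_vol (vinit a) (vinit b) * (b ord_max - a ord_max).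
Proof. by rewrite /box_vol big_ord_recr. Qed.

End Coordinates.

Lemma box_vol_ge0 (R : realType) n (a b : 'I_n -> R) :
  (forall i, a i <= b i) -> 0 <= box_vol a b.
Proof. by move=> ab; apply: prodr_ge0 => i _; rewrite subr_ge0. Qed.

Lemma lebesgue_vol_ge0 (R : realType) n (A : set ('I_n -> R)) :
  (0 <= lebesgue_vol A)%E.
Proof.
apply: le_ereal_inf_tmp => _ [a [b [ab _ ->]]].
by apply: nneseries_ge0 => k _ _; rewrite lee_fin box_vol_ge0.
Qed.

Lemma le_lebesgue_vol (R : realType) n (A B : set ('I_n -> R)) :
  A `<=` B -> (lebesgue_vol A <= lebesgue_vol B)%E.
Proof.
move=> AB; apply: ereal_inf_le_tmp => _ [a [b [ab cover ->]]].
by exists a, b; split => //; exact: subset_trans cover.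
Qed.

Section Cylinder.
Variables (R : realType) (n : nat).

Definition cylinder (c : 'I_n -> R) (r s t : R) : set ('I_n.+1 -> R) :=
  [set v | norm2 (fun i => vinit v i - c i) <= r /\ s <= v ord_max <= t].

Lemma ball_sub_cylinder (c : 'I_n -> R) (r s t e : R) :
  e <= r -> 2 * e <= t - s ->
  [set v | norm2 (fun i => v i - vrcons c ((s + t) / 2) i) <= e]
    `<=` cylinder c r s t.
Proof.
move=> er est v /= ve; set d := fun i => _ - _ in ve.
have dinit : vinit d = fun i => vinit v i - c i.
  by apply: funext => i; rewrite /d /vinit vrcons_widen.
have dmax : d ord_max = v ord_max - (s + t) / 2 by rewrite /d vrcons_max.
have dE := dotv_rsplit d d.
split.
  rewrite -dinit; apply: le_trans er; apply: le_trans ve.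
  by rewrite /norm2 ler_wsqrtr // dE lerDl -expr2 sqr_ge0.
have : `|d ord_max| <= e.
  apply: le_trans ve; rewrite /norm2 -sqrtr_sqr ler_wsqrtr //.
  by rewrite dE expr2 lerDr dotvv_ge0.
by rewrite dmax ler_norml => /andP[? ?]; apply/andP; split; lra.
Qed.

Variables (c : 'I_n -> R) (r s t : R).
Hypotheses (n_gt0 : (0 < n)%N) (r_gt0 : 0 < r) (s_lt_t : s < t).

Section Cover.
Local Open Scope ereal_scope.
Variables (a b : nat -> 'I_n.+1 -> R).
Hypothesis ab : forall k i, (a k i <= b k i)%R.
Hypothesis cover : cylinder c r s t `<=` \bigcup_k box (a k) (b k).

Let slice k : set R := `[a k ord_max, b k ord_max].
Let weight k : R := (r ^- n * box_vol (vinit (a k)) (vinit (b k)))%R.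
Let g k (h : R) : \bar R := (weight k * \1_(slice k) h)%:E.

Let weight_ge0 k : (0 <= weight k)%R.
Proof.
apply: mulr_ge0; first by rewrite invr_ge0 exprn_ge0 // ltW.
by apply: box_vol_ge0 => i; exact: ab.
Qed.

Let g_ge0 k h : 0 <= g k h.
Proof. by rewrite lee_fin mulr_ge0 // indicE ler0n. Qed.

(* The boxes meeting height h, shrunk by the homothety u |-> (u - c)/r, cover
   the unit ball; the other boxes are replaced by the null box at the origin. *)
Lemma unit_ball_vol_le_slices h : (s <= h <= t)%R ->
  lebesgue_vol (@unit_ball R n) <= \sum_(k <oo) g k h.
Proof.
move=> sht; apply: ereal_inf_lbound.
pose hit k := (a k ord_max <= h <= b k ord_max)%R.
pose a' k i := if hit k then ((vinit (a k) i - c i) / r)%R else 0%R.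
pose b' k i := if hit k then ((vinit (b k) i - c i) / r)%R else 0%R.
exists a', b'; split.
- move=> k i; rewrite /a' /b'; case: ifP => // _.
  by rewrite ler_pM2r ?invr_gt0 // lerD2r ab.
- move=> y y1.
  have [k _ covk] : (\bigcup_k box (a k) (b k)) (vrcons (fun i => c i + r * y i)%R h).
    apply: cover; split; last by rewrite vrcons_max.
    rewrite vinit_rcons (_ : (fun i => _) = (fun i => r * y i)%R).
      by rewrite norm2Z gtr0_norm // ler_piMr // ltW.
    by apply: funext => i; ring.
  have hitk : hit k by have := covk ord_max; rewrite vrcons_max.
  exists k => // i; rewrite /a' /b' hitk.
  have := covk (widen_ord (leqnSn n) i); rewrite vrcons_widen => /andP[lo hi].
  by rewrite /vinit ler_pdivrMr ?ler_pdivlMr //; apply/andP; split; lra.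
- apply: eq_eseriesr => k _; rewrite /g /box_vol /a' /b' indicE.
  have -> : (h \in slice k) = hit k by apply/idP/idP; rewrite /slice inE /= in_itv.
  case: (hit k); last by rewrite mulr0 subrr prodr_const card_ord expr0n gtn_eqF.
  have rVn : (r ^- n = \prod_(i < n) r^-1)%R by rewrite prodr_const card_ord exprVn.
  rewrite mulr1 /weight /box_vol rVn -big_split /=.
  by congr EFin; apply: eq_bigr => i _; field; rewrite gt_eqF.
Qed.

Lemma unit_ball_vol_le_series :
  ((t - s) * r ^+ n)%:E * lebesgue_vol (@unit_ball R n)
    <= \sum_(0 <= k <oo) (box_vol (a k) (b k))%:E.
Proof.
pose mu := @lebesgue_measure R.
pose D : set R := `[s, t]%classic.
have mD : measurable D by exact: measurable_itv.
have muD : mu D = (t - s)%:E by rewrite /mu /D lebesgue_measure_itv /= lte_fin s_lt_t.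
have mg k : measurable_fun D (g k).
  apply/measurable_EFinP/measurable_funM; first exact: measurable_cst.
  by apply: measurable_indic; exact: measurable_itv.
have int_sum : (t - s)%:E * lebesgue_vol (@unit_ball R n)
    <= \int[mu]_(h in D) \sum_(k <oo) g k h.
  rewrite muleC -muD -integral_cst //; apply: ge0_le_integral => //.
  - by move=> h _; exact: lebesgue_vol_ge0.
  - by apply: (ge0_emeasurable_sum (P := xpredT)) => [k h _ _|k _];
      [exact: g_ge0 | exact: mg].
  - by move=> h; rewrite /D /= in_itv /=; exact: unit_ball_vol_le_slices.
have int_g k : \int[mu]_(h in D) g k h <= (weight k * (b k ord_max - a k ord_max))%:E.
  rewrite /g (@integralZl_indic _ _ _ mu D mD (fun=> slice k)) //=; last first.
  - exact: measurable_itv.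
  - by rewrite ltNge weight_ge0.
  rewrite (@integral_indic _ _ _ mu D mD) ?EFinM; last exact: measurable_itv.
  apply: lee_wpmul2l; first by rewrite lee_fin weight_ge0.
  apply: le_trans (measureIl _ _ _) _; [exact: measurable_itv | exact: mD |].
  change (lebesgue_measure (slice k) <= (b k ord_max - a k ord_max)%:E).
  rewrite lebesgue_measure_itv /=; case: ifP => _; first by rewrite -EFinD.
  by rewrite lee_fin subr_ge0 ab.
have series_g : \sum_(k <oo) (weight k * (b k ord_max - a k ord_max))%:E
    = (r ^- n)%:E * \sum_(0 <= k <oo) (box_vol (a k) (b k))%:E.
  rewrite -nneseriesZl; last by move=> j _; rewrite lee_fin box_vol_ge0.
  by apply: eq_eseriesr => j _; rewrite box_vol_rsplit -EFinM mulrA.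
have bound : (t - s)%:E * lebesgue_vol (@unit_ball R n)
    <= (r ^- n)%:E * \sum_(0 <= k <oo) (box_vol (a k) (b k))%:E.
  rewrite -series_g; apply: (le_trans int_sum).
  rewrite integral_nneseries //.
  apply: lee_nneseries => k *; last exact: int_g.
  by apply: integral_ge0 => h _; exact: g_ge0.
rewrite EFinM muleAC muleC; apply: le_trans (lee_wpmul2l _ bound) _.
  by rewrite lee_fin exprn_ge0 // ltW.
by rewrite muleA -EFinM divff ?mul1e // expf_neq0 // gt_eqF.
Qed.

End Cover.

Lemma lebesgue_vol_cylinder :
  (((t - s) * r ^+ n)%:E * lebesgue_vol (@unit_ball R n)
    <= lebesgue_vol (cylinder c r s t))%E.
Proof.
apply: le_ereal_inf_tmp => _ [a [b [ab cover ->]]].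
exact: unit_ball_vol_le_series.
Qed.

End Cylinder.

Section VersionSpace.
Variables (R : realType) (n : nat) (w0 : 'I_n -> R) (rho : R).
Hypotheses (w0_unit : norm2 w0 = 1) (rho_gt0 : 0 < rho).

Let p : R := (1 + rho)^-1.
Let q : R := rho / (3 * (1 + rho)).

Let p_gt0 : 0 < p. Proof. by rewrite invr_gt0 addr_gt0. Qed.
Let q_gt0 : 0 < q. Proof. by rewrite divr_gt0 // mulr_gt0 // addr_gt0. Qed.
Let rho_p : rho * p = 3 * q.
Proof. by rewrite /p /q; field; rewrite gt_eqF // addr_gt0. Qed.

Let radius_le1 : (p + q) ^+ 2 + (2 * q) ^+ 2 <= 1.
Proof.
have rho1 : 1 + rho != 0 by rewrite gt_eqF // addr_gt0.
rewrite -subr_ge0 (_ : _ - _ = rho * (12 + 4 * rho) / (9 * (1 + rho) ^+ 2)).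
  have rho_ge0 := ltW rho_gt0.
  by rewrite divr_ge0 ?mulr_ge0 ?sqr_ge0 ?addr_ge0 ?mulr_ge0.
by rewrite /p /q; field.
Qed.

Lemma cylinder_sub_Hspace (P N : seq ('I_n -> R)) :
  (forall x, x \in P -> sphere x) ->
  (forall x, x \in N -> sphere x) ->
  (forall x, x \in P -> 0 < dotv w0 x) ->
  (forall x, x \in N -> dotv w0 x < - rho) ->
  cylinder (fun i => p * w0 i) q q (2 * q) `<=` Hspace P N.
Proof.
move=> Psph Nsph Ppos Nneg v [z_le /andP[q_le le_2q]].
set z := fun i => _ - _ in z_le.
have vE : vinit v = fun i => p * w0 i + z i by apply: funext => i; rewrite /z; ring.
clearbody z.
have v_ext1 x : dotv v (ext1 x) = p * dotv w0 x + dotv z x + v ord_max.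
  by rewrite dotv_rsplit ext1E vinit_rcons vrcons_max mulr1 vE dotvDl dotvZl.
have zx_bound x : sphere x -> `|dotv z x| <= q.
  by move=> x1; apply: le_trans (cauchy_schwarz z x) _; rewrite x1 mulr1.
split; [|split].
- have /ler_normlP[_ wz] := cauchy_schwarz w0 z.
  rewrite w0_unit mul1r in wz.
  have zz : dotv z z <= q ^+ 2 by rewrite -sqr_norm2 !expr2 ler_pM ?norm2_ge0.
  have v_ge0 : 0 <= v ord_max := le_trans (ltW q_gt0) q_le.
  have vv : v ord_max * v ord_max <= (2 * q) ^+ 2 by rewrite expr2 ler_pM.
  have pwz : p * dotv w0 z <= p * q by rewrite ler_pM2l // (le_trans wz).
  have ww : dotv w0 w0 = 1 by rewrite -sqr_norm2 w0_unit expr1n.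
  rewrite /norm2 -sqrtr1 ler_wsqrtr // dotv_rsplit vE dotvDl !dotvDr !dotvZl !dotvZr.
  rewrite ww (dotvC z w0); apply: le_trans radius_le1; nra.
- move=> x /[dup] /Psph /zx_bound /ler_normlP[zx _] /Ppos wx.
  rewrite v_ext1; have : 0 <= p * dotv w0 x by rewrite mulr_ge0 // ltW.
  lra.
- move=> x /[dup] /Nsph /zx_bound /ler_normlP[_ zx] /Nneg wx.
  rewrite v_ext1; have : p * dotv w0 x <= - (3 * q).
    by rewrite -rho_p -mulNr [_ * p]mulrC ler_pM2l // ltW.
  lra.
Qed.

End VersionSpace.

Theorem lemma3p3 (R : realType) (n k : nat) (w : 'I_k.+1 -> 'I_n -> R)
    (rho : R) (P N : seq ('I_n -> R)) :
  (forall i, norm2 (w i) = 1) ->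
  0 < rho ->
  (forall x, x \in P -> sphere x) ->
  (forall x, x \in N -> sphere x) ->
  (forall x, x \in P -> forall i, 0 < dotv (w i) x) ->
  (forall x, x \in N -> dotv (w ord0) x < - rho) ->
  (((rho / (3 * (1 + rho))) ^+ n.+1)%:E * lebesgue_vol (@unit_ball R n)
      <= lebesgue_vol (Hspace P N))%E /\
  exists c : 'I_n.+1 -> R,
    [set v | norm2 (fun i => v i - c i) <= rho / (6 * (1 + rho))]
      `<=` Hspace P N.
Proof.
move=> w_unit rho_gt0 Psph Nsph Ppos Nneg.
have cyl_sub := cylinder_sub_Hspace (w_unit ord0) rho_gt0 Psph Nsph
  (fun x Px => Ppos x Px ord0) Nneg.
set q := rho / (3 * (1 + rho)) in cyl_sub *.
have q_gt0 : 0 < q by rewrite divr_gt0 // mulr_gt0 // addr_gt0.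
split.
  apply: le_trans (le_lebesgue_vol cyl_sub).
  have q_lt_2q : q < 2 * q by lra.
  have := lebesgue_vol_cylinder _ (unit_vector_dim_gt0 (w_unit ord0)) q_gt0 q_lt_2q.
  by rewrite (_ : 2 * q - q = q) -?exprS //; ring.
exists (vrcons (fun i => (1 + rho)^-1 * w ord0 i) ((q + 2 * q) / 2)).
rewrite (_ : rho / (6 * (1 + rho)) = q / 2); last first.
  by rewrite /q; field; rewrite gt_eqF // addr_gt0.
by apply: subset_trans cyl_sub; apply: ball_sub_cylinder; lra.
Qed.
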